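(* Let $I\subseteq R$ be an $\mathfrak m$-primary monomial ideal. The following are equivalent: (1) $I$ is good; (2) for every integer $l\ge 1$ and every monomial $m\in I^l$ there exist $a_1,\dots,a_n\in\mathbb N$ with $m\in B_{a_1,\dots,a_n}$ and $a_1+\dots+a_n\ge l-1$; (3) for every integer $l\ge1$ and all $m_1,\dots,m_l\in G(I)$ there exist $a_1,\dots,a_n\in\mathbb N$ with $m_1\cdots m_l\in B_{a_1,\dots,a_n}$ and $a_1+\dots+a_n\ge l-1$.
   Context: Let $\mathbb K$ be a field, $R=\mathbb K[x_1,\dots,x_n]$, $\mathfrak m=\langle x_1,\dots,x_n\rangle$, $\mathbb N=\{0,1,2,\dots\}$. A monomial $x_1^{\alpha_1}\cdots x_n^{\alpha_n}$ is identified with the point $(\alpha_1,\dots,\alpha_n)\in\mathbb N^n$. For a monomial ideal $I$, $G(I)$ denotes its (unique) minimal monomial generating set. If $I$ is an $\mathfrak m$-primary monomial ideal, then for each $i$ there is a unique $d_i\ge1$ with $x_i^{d_i}\in G(I)$; write $\mu_i=x_i^{d_i}$. For $(a_1,\dots,a_n)\in\mathbb N^n$ the box associated to $I$ is $B_{a_1,\dots,a_n}=([a_1d_1,(a_1+1)d_1]\times\cdots\times[a_nd_n,(a_n+1)d_n])\cap\mathbb N^n$; a monomial belongs to a box if its exponent vector does. $I$ is called good if for every integer $l\ge1$, every element of $G(I^l)$ belongs to some box $B_{a_1,\dots,a_n}$ with $a_1+\dots+a_n=l-1$; otherwise $I$ is called bad. *)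

(* Monomial ideals of K[x_1..x_n] are represented
   combinatorially by their sets of monomials = exponent vectors in N^n. *)
From mathcomp Require Import all_boot.
Set Implicit Arguments. Unset Strict Implicit. Unset Printing Implicit Defensive.

Definition mon (n : nat) := 'I_n -> nat.

Definition mdiv n (m m' : mon n) : Prop := forall i, m i <= m' i.

Definition pure n (i : 'I_n) (d : nat) : mon n := fun j => if j == i then d else 0.

Definition mone n : mon n := fun _ => 0.

Definition is_monomial_ideal n (I : mon n -> Prop) : Prop :=
  forall m m', I m -> mdiv m m' -> I m'.

Definition m_primary n (I : mon n -> Prop) : Prop :=
  ~ I (@mone n) /\ forall i : 'I_n, exists d, I (pure i d).

Definition mingen n (I : mon n -> Prop) (m : mon n) : Prop :=
  I m /\ forall m', I m' -> mdiv m' m -> mdiv m m'.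

Definition mprod n l (ms : 'I_l -> mon n) : mon n :=
  fun i => \sum_(k < l) ms k i.

Definition ipow n (I : mon n -> Prop) (l : nat) (m : mon n) : Prop :=
  exists ms : 'I_l -> mon n, (forall k, I (ms k)) /\ mdiv (mprod ms) m.

Definition in_box n (d a : 'I_n -> nat) (m : mon n) : Prop :=
  forall i, a i * d i <= m i <= (a i).+1 * d i.

Definition asum n (a : 'I_n -> nat) : nat := \sum_(i < n) a i.

(* I is good (d_i the exponents of the pure powers in G(I)) *)
Definition good n (I : mon n -> Prop) (d : 'I_n -> nat) : Prop :=
  forall l, 1 <= l -> forall m, mingen (ipow I l) m ->
    exists a : 'I_n -> nat, in_box d a m /\ asum a = l - 1.

(* Write d_i for the exponent of the pure power x_i^{d_i} in G(I).  A monomial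
   m lies in the box B_a exactly when (m_i - 1) / d_i <= a_i <= m_i / d_i for
   every i; in particular the "floor box" a_i = m_i / d_i contains m and
   dominates the index sum of every other box containing m, and enlarging m
   can only increase this maximal index sum.
   Then (1) <-> (2) is the combination of floor boxes with the intermediate
   value lemma between the bounds above, (2) -> (3) is immediate, and
   (3) -> (2) replaces each factor of a product by a minimal generator below it. *)
From mathcomp Require Import all_boot.
From mathcomp Require Import zify.
From Stdlib Require Import Classical IndefiniteDescription.
Set Implicit Arguments. Unset Strict Implicit. Unset Printing Implicit Defensive.

Definition ipow_boxed n (I : mon n -> Prop) (d : 'I_n -> nat) : Prop :=
  forall l, 1 <= l -> forall m, ipow I l m ->
    exists a : 'I_n -> nat, in_box d a m /\ l - 1 <= asum a.

Definition gens_boxed n (I : mon n -> Prop) (d : 'I_n -> nat) : Prop :=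
  forall l, 1 <= l -> forall ms : 'I_l -> mon n, (forall k, mingen I (ms k)) ->
    exists a : 'I_n -> nat, in_box d a (mprod ms) /\ l - 1 <= asum a.

Lemma asum_incr n (a b : 'I_n -> nat) (i : 'I_n) :
  (forall j, b j = if j == i then (a j).+1 else a j) -> asum b = (asum a).+1.
Proof.
move=> Hb; rewrite /asum (bigD1 i) //= [X in _ = X.+1](bigD1 i) //= Hb eqxx addSn.
by congr (_ + _).+1; apply: eq_bigr => j /negbTE Hj; rewrite Hb Hj.
Qed.

Lemma asum_pos_coord n (c : 'I_n -> nat) : 0 < asum c -> exists i, 0 < c i.
Proof.
move=> Hpos; apply: NNPP => Hnone; move: Hpos; rewrite /asum big1 // => i _.
by apply/eqP; rewrite -leqn0 leqNgt; apply/negP => Hi; apply: Hnone; exists i.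
Qed.

Lemma sum_between n (lo hi : 'I_n -> nat) (s : nat) :
  (forall i, lo i <= hi i) -> asum lo <= s <= asum hi ->
  exists a : 'I_n -> nat, (forall i, lo i <= a i <= hi i) /\ asum a = s.
Proof.
move=> Hlh /andP [Hlo]; rewrite -(subnKC Hlo).
elim: (s - asum lo) => [|k IH] Hk.
  by exists lo; split=> [i|]; [rewrite leqnn Hlh | rewrite addn0].
have [a [Ha Hsum]] := IH ltac:(lia).
have [i Hi] : exists i, a i < hi i.
  apply: NNPP => Hnone.
  suff : asum hi <= asum a by lia.
  apply: leq_sum => i _; rewrite leqNgt; apply/negP => Hi; apply: Hnone.
  by exists i.
exists (fun j => if j == i then (a j).+1 else a j); split.
  move=> j; case: eqP => [->|_]; last exact: Ha.
  by move/andP: (Ha i) => [H1 _]; rewrite Hi andbT; apply: leqW.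
by rewrite (asum_incr (a := a) (i := i)) // Hsum addnS.
Qed.

Lemma bracket_of_quotients (x dx a : nat) : 0 < dx ->
  (x - 1) %/ dx <= a <= x %/ dx -> a * dx <= x <= a.+1 * dx.
Proof.
move=> Hdx /andP [Hlo Hhi]; apply/andP; split.
  by apply: leq_trans (leq_divM x dx); rewrite leq_mul2r Hhi orbT.
have Hceil := ltn_ceil (x - 1) Hdx.
have : ((x - 1) %/ dx).+1 * dx <= a.+1 * dx by rewrite leq_mul2r ltnS Hlo orbT.
lia.
Qed.

Lemma floor_box n (d : 'I_n -> nat) (m : mon n) : (forall i, 0 < d i) ->
  in_box d (fun i => m i %/ d i) m.
Proof.
move=> Hd i; apply/andP; split; first exact: leq_divM.
exact: ltnW (ltn_ceil _ (Hd i)).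
Qed.

Lemma box_le_floor n (d a : 'I_n -> nat) (m : mon n) : (forall i, 0 < d i) ->
  in_box d a m -> forall i, a i <= m i %/ d i.
Proof. by move=> Hd Hb i; rewrite leq_divRL //; case/andP: (Hb i). Qed.

Lemma box_of_multiple n (d a : 'I_n -> nat) (m0 m : mon n) : (forall i, 0 < d i) ->
  in_box d a m0 -> mdiv m0 m -> exists a', in_box d a' m /\ asum a <= asum a'.
Proof.
move=> Hd Hb Hm; exists (fun i => m i %/ d i); split; first exact: floor_box.
apply: leq_sum => i _; apply: leq_trans (box_le_floor Hd Hb i) _.
exact: leq_div2r.
Qed.

Lemma mingen_below n (P : mon n -> Prop) (m : mon n) :
  P m -> exists m0, mingen P m0 /\ mdiv m0 m.
Proof.
have [s] : exists s, \sum_(i < n) m i < s by exists (\sum_(i < n) m i).+1.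
elim: s m => [//|s IH] m Hs Pm.
case: (classic (mingen P m)) => Hmin; first by exists m; split=> // i.
have [m' [Pm' [Hdiv Hndiv]]] : exists m', P m' /\ mdiv m' m /\ ~ mdiv m m'.
  apply: NNPP => Hc; apply: Hmin; split=> // m' Pm' Hm'.
  by apply: NNPP => Hn; apply: Hc; exists m'.
have [i Hi] : exists i, m' i < m i.
  apply: NNPP => Hc; apply: Hndiv => i; rewrite leqNgt; apply/negP => Hl.
  by apply: Hc; exists i.
have Hlt : \sum_(j < n) m' j < \sum_(j < n) m j.
  rewrite (bigD1 i) //= [X in _ < X](bigD1 i) //= -addSn.
  by apply: leq_add => //; apply: leq_sum => j _; apply: Hdiv.
have [m0 [Hm0 Hdiv0]] := IH m' ltac:(lia) Pm'.
by exists m0; split=> // j; apply: leq_trans (Hdiv0 j) (Hdiv j).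
Qed.

Lemma ipow_snoc n (I : mon n -> Prop) l (m g m' : mon n) :
  ipow I l m -> I g -> (forall i, m i + g i <= m' i) -> ipow I l.+1 m'.
Proof.
move=> [ms [Hms Hdv]] Ig Hle.
exists (fun k => if unlift ord_max k is Some j then ms j else g); split.
  by move=> k; case: (unlift ord_max k).
move=> i; rewrite /mprod big_ord_recr /= unlift_none.
apply: leq_trans (Hle i); rewrite leq_add2r.
apply: leq_trans (Hdv i); apply: eq_leq; apply: eq_bigr => k _.
have -> : widen_ord (leqnSn l) k = lift ord_max k.
  by apply: val_inj; rewrite /= /bump leqNgt ltn_ord.
by rewrite liftK.
Qed.

Lemma ipow_pure_powers n (I : mon n -> Prop) (d : 'I_n -> nat) :
  (forall i, I (pure i (d i))) ->
  forall l (c : 'I_n -> nat), asum c = l -> ipow I l (fun i => c i * d i).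
Proof.
move=> Hpure; elim=> [|l IH] c Hc.
  by exists (fun=> @mone n); split; [case | move=> i; rewrite /mprod big_ord0].
have [i Hi] : exists i, 0 < c i by apply: asum_pos_coord; rewrite Hc.
pose c' j := if j == i then (c j).-1 else c j.
have Hcc' : forall j, c j = if j == i then (c' j).+1 else c' j.
  by move=> j; rewrite /c'; case: eqP => [->|//]; rewrite prednK.
apply: (@ipow_snoc _ _ _ (fun j => c' j * d j) (pure i (d i))) => //.
- by apply: IH; move: Hc; rewrite (asum_incr Hcc') => -[].
- by move=> j; rewrite Hcc' /pure; case: eqP => [->|_]; rewrite ?addn0 // mulSn addnC.
Qed.

(* (2) -> (3): a product of l generators lies in I^l. *)
Lemma gens_boxed_of_ipow_boxed n (I : mon n -> Prop) (d : 'I_n -> nat) :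
  ipow_boxed I d -> gens_boxed I d.
Proof.
move=> Hboxed l Hl ms Hms; apply: Hboxed => //.
by exists ms; split=> [k|i //]; case: (Hms k).
Qed.

Section MPrimary.

Variables (n : nat) (I : mon n -> Prop) (d : 'I_n -> nat).
Hypothesis HI : is_monomial_ideal I.
Hypothesis Hprim : m_primary I.
Hypothesis Hd : forall i : 'I_n, mingen I (pure i (d i)).

(* d_i > 0, since x_i^0 = 1 is not in the proper ideal I. *)
Lemma exps_pos : forall i, 0 < d i.
Proof.
move=> i; rewrite lt0n; apply/eqP => H0; apply: (proj1 Hprim).
by apply: (HI (proj1 (Hd i))) => j; rewrite /pure H0; case: (j == i).
Qed.

(* Key bound: a minimal generator m of I^l has sum_i (m_i - 1) / d_i < l;
   otherwise some product of l pure powers would lie strictly below m. *)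
Lemma mingen_ipow_low_sum l (m : mon n) : 0 < l -> mingen (ipow I l) m ->
  asum (fun i => (m i - 1) %/ d i) < l.
Proof.
move=> Hl [_ Hmin]; rewrite ltnNge; apply/negP => Hge.
have Hsum0 : asum (fun _ : 'I_n => 0) = 0 by rewrite /asum big1.
have [c [Hc Hcl]] := @sum_between n (fun=> 0) (fun i => (m i - 1) %/ d i) l
  (fun i => leq0n _) ltac:(by rewrite Hsum0 leq0n Hge).
have Hcd : forall i, c i * d i <= m i - 1.
  move=> i; apply: leq_trans (leq_divM (m i - 1) (d i)).
  by rewrite leq_mul2r; case/andP: (Hc i) => _ ->; rewrite orbT.
have Hdiv := Hmin _ (ipow_pure_powers (fun i => proj1 (Hd i)) Hcl)
  (fun i => leq_trans (Hcd i) (leq_subr 1 (m i))).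
have [i Hi] : exists i, 0 < c i by apply: asum_pos_coord; rewrite Hcl.
have : 0 < c i * d i by rewrite muln_gt0 Hi exps_pos.
by have := Hdiv i; have := Hcd i; lia.
Qed.

(* (1) -> (2): compare with the box of a minimal generator below m. *)
Lemma ipow_boxed_of_good : good I d -> ipow_boxed I d.
Proof.
move=> Hgood l Hl m Hm.
have [m0 [Hm0 Hdiv]] := mingen_below Hm.
have [a [Hb Ha]] := Hgood l Hl m0 Hm0.
have [a' [Hb' Ha']] := box_of_multiple exps_pos Hb Hdiv.
by exists a'; rewrite -Ha.
Qed.

(* (2) -> (1): the admissible box indices of a minimal generator m of I^l
   range between (m_i - 1) / d_i and m_i / d_i, whose sums enclose l - 1. *)
Lemma good_of_ipow_boxed : ipow_boxed I d -> good I d.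
Proof.
move=> Hboxed l Hl m Hm.
pose lo i := (m i - 1) %/ d i; pose hi i := m i %/ d i.
have Hlh : forall i, lo i <= hi i by move=> i; apply: leq_div2r; apply: leq_subr.
have Hhi : l - 1 <= asum hi.
  have [a [Hb Ha]] := Hboxed l Hl m (proj1 Hm).
  apply: leq_trans Ha _; apply: leq_sum => i _.
  exact: box_le_floor exps_pos Hb i.
have Hlo : asum lo < l := mingen_ipow_low_sum Hl Hm.
have [a [Ha Has]] := @sum_between n lo hi (l - 1) Hlh ltac:(apply/andP; lia).
by exists a; split=> // i; apply: bracket_of_quotients (exps_pos i) (Ha i).
Qed.

(* (3) -> (2): replace each factor by a minimal generator dividing it. *)
Lemma ipow_boxed_of_gens_boxed : gens_boxed I d -> ipow_boxed I d.
Proof.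
move=> Hgens l Hl m [ms [Hms Hdv]].
have Hg : forall k, { g | mingen I g /\ mdiv g (ms k) }.
  by move=> k; apply: constructive_indefinite_description; apply: mingen_below.
pose g k := proj1_sig (Hg k).
have [a [Hb Ha]] := Hgens l Hl g (fun k => proj1 (proj2_sig (Hg k))).
have Hle : mdiv (mprod g) m.
  move=> i; apply: leq_trans (Hdv i); apply: leq_sum => k _.
  exact: (proj2 (proj2_sig (Hg k))).
have [a' [Hb' Ha']] := box_of_multiple exps_pos Hb Hle.
by exists a'; split=> //; apply: leq_trans Ha Ha'.
Qed.

End MPrimary.

Theorem mainTheorem1 (n : nat) (I : mon n -> Prop) (d : 'I_n -> nat)
  (HI : is_monomial_ideal I) (Hprim : m_primary I)
  (Hd : forall i : 'I_n, mingen I (pure i (d i))) :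
  (good I d <->
     (forall l, 1 <= l -> forall m, ipow I l m ->
        exists a : 'I_n -> nat, in_box d a m /\ l - 1 <= asum a))
  /\
  ((forall l, 1 <= l -> forall m, ipow I l m ->
        exists a : 'I_n -> nat, in_box d a m /\ l - 1 <= asum a) <->
   (forall l, 1 <= l -> forall ms : 'I_l -> mon n, (forall k, mingen I (ms k)) ->
        exists a : 'I_n -> nat, in_box d a (mprod ms) /\ l - 1 <= asum a)).
Proof.
split; split.
- exact: ipow_boxed_of_good HI Hprim Hd.
- exact: good_of_ipow_boxed HI Hprim Hd.
- exact: gens_boxed_of_ipow_boxed.
- exact: ipow_boxed_of_gens_boxed HI Hprim Hd.
Qed.
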